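(* Let $K$ be an algebraically closed field of characteristic $0$ and let $X$ be a finite set of distinct points in $\mathbb{P}^1\times\mathbb{P}^1\times\mathbb{P}^1$ over $K$, with $t_1=|\pi_1(X)|$ and $t_2=|\pi_2(X)|$. Suppose $\mathcal{L}$ is a line of type $(1,1,0)$ with $X\cap\mathcal{L}\neq\emptyset$ but $X\not\subseteq\mathcal{L}$. Set $X_2=X\cap\mathcal{L}$ and $X_1=X\setminus X_2$. Then $R_{t_1-1,t_2-1,0}=(I(X_1)+I(X_2))_{t_1-1,t_2-1,0}$. Consequently, $\dim_K\big(R/(I(X_1)+I(X_2))\big)_{t_1-1,t_2-1,k}=0$ for all $k\ge0$.
   Context: Let $R=K[x_0,x_1,y_0,y_1,z_0,z_1]$ be $\mathbb{N}^3$-graded with $\deg x_i=(1,0,0)$, $\deg y_i=(0,1,0)$, $\deg z_i=(0,0,1)$. For a point $P=[a_0:a_1]\times[b_0:b_1]\times[c_0:c_1]$, $I(P)=(a_1x_0-a_0x_1,\,b_1y_0-b_0y_1,\,c_1z_0-c_0z_1)$, and for a finite set $Y=\{P_1,\dots,P_s\}$, $I(Y)=\bigcap_i I(P_i)$. $\pi_i$ denotes the projection onto the $i$-th factor $\mathbb{P}^1$. A line of type $(1,1,0)$ is the subvariety defined by an ideal $(L,L')$ with $L\in R_{1,0,0}$, $L'\in R_{0,1,0}$ nonzero. *)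

From HB Require Import structures.
From mathcomp Require Import all_boot all_order all_algebra.
From mathcomp Require Import mpoly.
Set Implicit Arguments. Unset Strict Implicit. Unset Printing Implicit Defensive.
Import GRing.Theory.
Local Open Scope ring_scope.

(* R = K[x0,x1,y0,y1,z0,z1] is {mpoly K[6]} with
   x0 = 'X_0, x1 = 'X_1, y0 = 'X_2, y1 = 'X_3, z0 = 'X_4, z1 = 'X_5. *)
Section Defs.
Variable K : fieldType.
Notation R := {mpoly K[6]}.

Definition vx0 : 'I_6 := inord 0. Definition vx1 : 'I_6 := inord 1.
Definition vy0 : 'I_6 := inord 2. Definition vy1 : 'I_6 := inord 3.
Definition vz0 : 'I_6 := inord 4. Definition vz1 : 'I_6 := inord 5.

(* f lies in the graded piece R_{(a,b,c)}: every monomial of f has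
   tridegree (a,b,c) (the zero polynomial lies in every piece). *)
Definition in_trideg (a b c : nat) (f : R) : Prop :=
  forall m : 'X_{1..6}, m \in msupp f ->
    [/\ (m vx0 + m vx1 = a)%N, (m vy0 + m vy1 = b)%N & (m vz0 + m vz1 = c)%N].

(* A point of P^1 is represented by homogeneous coordinates (a0,a1) <> (0,0);
   canonical representative used to compare points projectively. *)
Definition P1_ok (p : K * K) : bool := p != (0, 0).
Definition P1_norm (p : K * K) : K * K :=
  if p.1 != 0 then (1, p.2 / p.1) else (0, 1).

Definition P3 := ((K * K) * (K * K) * (K * K))%type.
Definition pt_ok (P : P3) : bool := [&& P1_ok P.1.1, P1_ok P.1.2 & P1_ok P.2].
Definition pt_norm (P : P3) : P3 := (P1_norm P.1.1, P1_norm P.1.2, P1_norm P.2).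

Definition point_set (X : seq P3) : bool :=
  all pt_ok X && uniq (map pt_norm X).

Definition card_pi1 (X : seq P3) : nat := size (undup (map (fun P => P1_norm P.1.1) X)).
Definition card_pi2 (X : seq P3) : nat := size (undup (map (fun P => P1_norm P.1.2) X)).

Definition in_IP (P : P3) (f : R) : Prop :=
  let: (a, b, c) := P in
  exists u v w : R,
    f = u * (a.2 *: 'X_vx0 - a.1 *: 'X_vx1)
      + v * (b.2 *: 'X_vy0 - b.1 *: 'X_vy1)
      + w * (c.2 *: 'X_vz0 - c.1 *: 'X_vz1).

Definition in_IY (Y : seq P3) (f : R) : Prop := forall P, P \in Y -> in_IP P f.

Definition in_sum_IY (Y1 Y2 : seq P3) (f : R) : Prop :=
  exists g h : R, [/\ in_IY Y1 g, in_IY Y2 h & f = g + h].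

(* A line of type (1,1,0) defined by (L, L') with
   L = l.1 x0 + l.2 x1 in R_{1,0,0}, L' = l'.1 y0 + l'.2 y1 in R_{0,1,0}, both
   nonzero (i.e. l, l' <> (0,0)). *)
Definition on_line (l l' : K * K) (P : P3) : bool :=
  (l.1 * P.1.1.1 + l.2 * P.1.1.2 == 0) && (l'.1 * P.1.2.1 + l'.2 * P.1.2.2 == 0).

End Defs.

(* Write L and L' for the linear forms defining the line.  On P^1 a nonzero linear
   form has a single zero, and X meets the line, so exactly t1 - 1 of the points of
   pi_1(X) are off {L = 0}; let G1 be the product of the linear forms vanishing at
   them, and G2 the analogous product for pi_2(X) and L'.  Modulo L any two linear
   forms in x not divisible by L are proportional, so every monomial of x-degree
   t1 - 1 is a scalar multiple of G1 modulo L, and similarly in y.  Hence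
   R_{t1-1,t2-1,k} lies in (G1 G2) + (L) + (L').  A point of X off the line has its
   first or second coordinate among those used in G1 or G2, so G1 G2 lies in I(X1),
   while (L, L') lies in I(P) for every point P on the line. *)

From HB Require Import structures.
From mathcomp Require Import all_boot all_order all_algebra.
From mathcomp Require Import mpoly ring.
Set Implicit Arguments.
Unset Strict Implicit.
Unset Printing Implicit Defensive.

Import GRing.Theory.
Local Open Scope ring_scope.

Section ProjectiveLine.
Variable K : fieldType.
Implicit Types (l u : K * K) (c : K).

Definition ldot l u : K := l.1 * u.1 + l.2 * u.2.

Lemma ldotZr l c u : ldot l (c * u.1, c * u.2) = c * ldot l u.
Proof. rewrite /ldot /=; ring. Qed.

Lemma P1_norm_scale u :
  u != (0, 0) -> exists2 c, c != 0 & P1_norm u = (c * u.1, c * u.2).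
Proof.
case: u => u1 u2; rewrite /P1_norm xpair_eqE negb_and /=.
have [-> /= u2nz | u1nz _] := eqVneq u1 0.
  by exists u2^-1; rewrite ?invr_eq0 // mulr0 mulVf.
by exists u1^-1; rewrite ?invr_eq0 // mulVf // mulrC.
Qed.

Lemma P1_normZ c u : c != 0 -> P1_norm (c * u.1, c * u.2) = P1_norm u.
Proof.
case: u => u1 u2 cnz; rewrite /P1_norm /= mulf_eq0 (negbTE cnz) /=.
have [//|u1nz] := eqVneq u1 0; congr (_, _); field.
by rewrite cnz u1nz.
Qed.

Lemma ldot_P1_norm_eq0 l u : u != (0, 0) -> (ldot l (P1_norm u) == 0) = (ldot l u == 0).
Proof. by case/P1_norm_scale=> c cnz ->; rewrite ldotZr mulf_eq0 (negbTE cnz). Qed.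

Lemma ldot_eq0_scale l u : l != (0, 0) -> u != (0, 0) -> ldot l u == 0 ->
  exists2 c, c != 0 & u = (c * l.2, c * - l.1).
Proof.
case: l u => [l1 l2] [u1 u2]; rewrite /ldot !xpair_eqE /= !negb_and => lnz unz /eqP Hlu.
have [l20 | l2nz] := eqVneq l2 0.
  have l1nz : l1 != 0 by move: lnz; rewrite l20 eqxx orbF.
  have u10 : u1 = 0.
    apply/eqP; move: Hlu; rewrite l20 mul0r addr0 => /eqP.
    by rewrite mulf_eq0 (negbTE l1nz).
  have u2nz : u2 != 0 by move: unz; rewrite u10 eqxx.
  exists (- u2 / l1); first by rewrite mulf_eq0 invr_eq0 oppr_eq0 negb_or u2nz.
  by rewrite l20 u10 mulr0; congr (_, _); field.
have u2E : u2 = - (l1 * u1) / l2.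
  by apply: (mulIf l2nz); rewrite divfK // mulrC -[l2 * u2](addKr (l1 * u1)) Hlu addr0.
exists (u1 / l2); last by rewrite u2E; congr (_, _); field.
rewrite mulf_eq0 invr_eq0 (negbTE l2nz) orbF.
by apply: contraTneq unz => u10; rewrite u2E u10 mulr0 oppr0 mul0r eqxx.
Qed.

Lemma P1_norm_ldot_eq0 l u : l != (0, 0) -> u != (0, 0) -> ldot l u == 0 ->
  P1_norm u = P1_norm (l.2, - l.1).
Proof.
move=> lnz unz /(ldot_eq0_scale lnz unz)[c cnz ->].
exact: (P1_normZ (l.2, - l.1) cnz).
Qed.

Definition off_zero l (s : seq (K * K)) : seq (K * K) :=
  [seq a <- undup [seq P1_norm u | u <- s] | ldot l a != 0].

Lemma P1_norm_mem_off_zero l (s : seq (K * K)) u :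
  u != (0, 0) -> u \in s -> ldot l u != 0 -> P1_norm u \in off_zero l s.
Proof. by move=> unz us lu; rewrite mem_filter ldot_P1_norm_eq0 // lu mem_undup map_f. Qed.

Lemma size_off_zero l (s : seq (K * K)) u0 :
  l != (0, 0) -> all (fun u => u != (0, 0)) s -> u0 \in s -> ldot l u0 == 0 ->
  size (off_zero l s) = (size (undup [seq P1_norm u | u <- s])).-1.
Proof.
move=> lnz /allP snz u0s lu0; set t := undup _.
have zero_t : count (fun a => ldot l a == 0) t = 1%N.
  rewrite (@eq_in_count _ _ (pred1 (P1_norm u0))).
    by rewrite count_uniq_mem ?undup_uniq // mem_undup map_f.
  move=> a; rewrite mem_undup => /mapP[u us ->] /=.
  have [unz u0nz] := (snz u us, snz u0 u0s).
  rewrite ldot_P1_norm_eq0 //; apply/idP/eqP => [lu | eq_u].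
    by rewrite (P1_norm_ldot_eq0 lnz unz lu) (P1_norm_ldot_eq0 lnz u0nz lu0).
  by rewrite -ldot_P1_norm_eq0 // eq_u ldot_P1_norm_eq0.
rewrite size_filter -(count_predC (fun a => ldot l a != 0) t).
have -> : count (predC (fun a => ldot l a != 0)) t = count (fun a => ldot l a == 0) t.
  by apply: eq_count => a /=; rewrite negbK.
by rewrite zero_t addn1.
Qed.

End ProjectiveLine.

Section Ideal3.
Variables (A : comPzRingType) (g1 g2 g3 : A).
Implicit Types f h : A.

Definition ideal3 f : Prop := exists u v w, f = u * g1 + v * g2 + w * g3.

Lemma ideal3_0 : ideal3 0.
Proof. by exists 0, 0, 0; rewrite !mul0r !addr0. Qed.

Lemma ideal3D f h : ideal3 f -> ideal3 h -> ideal3 (f + h).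
Proof.
by move=> [u [v [w ->]]] [u' [v' [w' ->]]]; exists (u + u'), (v + v'), (w + w'); ring.
Qed.

Lemma ideal3Ml h f : ideal3 f -> ideal3 (h * f).
Proof. by move=> [u [v [w ->]]]; exists (h * u), (h * v), (h * w); ring. Qed.

Lemma ideal3Mr h f : ideal3 f -> ideal3 (f * h).
Proof. by rewrite mulrC; apply: ideal3Ml. Qed.

Lemma ideal3_gen1 h : ideal3 (h * g1).
Proof. by exists h, 0, 0; rewrite !mul0r !addr0. Qed.

Lemma ideal3_gen2 h : ideal3 (h * g2).
Proof. by exists 0, h, 0; rewrite !mul0r add0r addr0. Qed.

End Ideal3.

Section Forms.
Variables (K : fieldType) (A : comAlgType K) (x0 x1 : A).
Implicit Types (l a u : K * K) (c : K) (f g L : A).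

Lemma scale_in_alg c f : c *: f = in_alg A c * f.
Proof. by rewrite /= mulr_algl. Qed.

Definition linear_form l : A := l.1 *: x0 + l.2 *: x1.

Definition vanishing_form a : A := a.2 *: x0 - a.1 *: x1.

Lemma vanishing_formZ c a : vanishing_form (c * a.1, c * a.2) = c *: vanishing_form a.
Proof. by rewrite /vanishing_form /= !scale_in_alg; ring. Qed.

Lemma vanishing_form_P1_norm u : u != (0, 0) ->
  exists c, vanishing_form (P1_norm u) = c *: vanishing_form u.
Proof. by case/P1_norm_scale=> c _ ->; exists c; rewrite vanishing_formZ. Qed.

Lemma linear_form_ldot_eq0 l u : l != (0, 0) -> u != (0, 0) -> ldot l u == 0 ->
  exists c, linear_form l = c *: vanishing_form u.
Proof.
move=> lnz unz /(ldot_eq0_scale lnz unz)[c cnz ->]; exists (- c^-1).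
rewrite (vanishing_formZ c (l.2, - l.1)) scalerA mulNr mulVf // scaleN1r.
by rewrite /vanishing_form /linear_form /= !scale_in_alg; ring.
Qed.

Lemma prod_vanishing_form_mem (s : seq (K * K)) u : u != (0, 0) -> P1_norm u \in s ->
  exists h, \prod_(a <- s) vanishing_form a = h * vanishing_form u.
Proof.
move=> unz /(big_rem _)-> /=; have [c ->] := vanishing_form_P1_norm unz.
by exists (c *: \prod_(a <- rem (P1_norm u) s) vanishing_form a); rewrite !scale_in_alg; ring.
Qed.

Definition prop_mod L f g : Prop := exists c U, f = c *: g + L * U.

Lemma prop_mod1 L : prop_mod L 1 1.
Proof. by exists 1, 0; rewrite scale1r mulr0 addr0. Qed.

Lemma prop_modM L f g f' g' :
  prop_mod L f g -> prop_mod L f' g' -> prop_mod L (f * f') (g * g').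
Proof.
move=> [c [U ->]] [c' [U' ->]].
exists (c * c'), (U * (c' *: g' + L * U') + c *: g * U').
by rewrite !scale_in_alg; ring.
Qed.

Lemma prop_mod_x0 l a : ldot l a != 0 -> prop_mod (linear_form l) x0 (vanishing_form a).
Proof.
move=> da; exists (l.2 / ldot l a), (in_alg A (a.1 / ldot l a)).
rewrite -[LHS]scale1r -(mulVf da); move: (ldot l a)^-1 => e.
by rewrite /linear_form /vanishing_form /ldot !scale_in_alg; ring.
Qed.

Lemma prop_mod_x1 l a : ldot l a != 0 -> prop_mod (linear_form l) x1 (vanishing_form a).
Proof.
move=> da; exists (- l.1 / ldot l a), (in_alg A (a.2 / ldot l a)).
rewrite -[LHS]scale1r -(mulVf da); move: (ldot l a)^-1 => e.
by rewrite /linear_form /vanishing_form /ldot !scale_in_alg; ring.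
Qed.

Lemma prop_mod_monomial l (s : seq (K * K)) n0 n1 :
  all (fun a => ldot l a != 0) s -> (n0 + n1 = size s)%N ->
  prop_mod (linear_form l) (x0 ^+ n0 * x1 ^+ n1) (\prod_(a <- s) vanishing_form a).
Proof.
elim: s n0 n1 => [|a s IHs] n0 n1 /=.
  move=> _ /eqP; rewrite addn_eq0 => /andP[/eqP-> /eqP->].
  by rewrite big_nil mulr1; apply: prop_mod1.
case/andP=> da /IHs{}IHs; rewrite big_cons.
case: n0 => [|n0] sz.
  case: n1 sz => [|n1] // /eqP; rewrite !add0n eqSS => /eqP sz.
  rewrite mul1r exprS; apply: prop_modM (prop_mod_x1 da) _.
  by rewrite -[x1 ^+ n1]mul1r -(expr0 x0); apply: IHs.
rewrite exprS -mulrA; apply: prop_modM (prop_mod_x0 da) _; apply: IHs.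
by move: sz; rewrite addSn => -[].
Qed.

Lemma ideal3_prop_mod L L' f g f' g' :
  prop_mod L f g -> prop_mod L' f' g' -> ideal3 (g * g') L L' (f * f').
Proof.
move=> [c [U ->]] [c' [U' ->]].
exists (in_alg A (c * c')), (U * (c' *: g' + L' * U')), (c *: g * U').
by rewrite !scale_in_alg; ring.
Qed.

End Forms.

Section Trigraded.
Variable K : fieldType.
Local Notation R := {mpoly K[6]}.
Local Notation xform := (vanishing_form 'X_vx0 'X_vx1).
Local Notation yform := (vanishing_form 'X_vy0 'X_vy1).
Local Notation xlin := (linear_form 'X_vx0 'X_vx1).
Local Notation ylin := (linear_form 'X_vy0 'X_vy1).

Lemma in_IPE (P : P3 K) (f : R) :
  in_IP P f <-> ideal3 (xform P.1.1) (yform P.1.2) (vanishing_form 'X_vz0 'X_vz1 P.2) f.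
Proof. by case: P => [[a b] c]. Qed.

Lemma mpolyX_trideg (m : 'X_{1..6}) : 'X_[m] =
  ('X_vx0 ^+ m vx0 * 'X_vx1 ^+ m vx1) * ('X_vy0 ^+ m vy0 * 'X_vy1 ^+ m vy1)
  * ('X_vz0 ^+ m vz0 * 'X_vz1 ^+ m vz1) :> R.
Proof.
rewrite mpolyXE_id (eq_bigr (fun i : 'I_6 => 'X_(inord i) ^+ m (inord i))); last first.
  by move=> i _; rewrite inord_val.
rewrite -(big_mkord xpredT (fun i => 'X_(inord i) ^+ m (inord i))).
by rewrite !big_nat_recr //= big_geq // mul1r !mulrA.
Qed.

Lemma ideal3_bidegree (l l' : K * K) (sx sy : seq (K * K)) (f : R) :
  all (fun a => ldot l a != 0) sx -> all (fun b => ldot l' b != 0) sy ->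
  (forall m, m \in msupp f -> (m vx0 + m vx1 = size sx)%N /\ (m vy0 + m vy1 = size sy)%N) ->
  ideal3 (\prod_(a <- sx) xform a * \prod_(b <- sy) yform b) (xlin l) (ylin l') f.
Proof.
move=> lsx l'sy degf; rewrite [X in ideal3 _ _ _ X]mpolyE [X in ideal3 _ _ _ X]big_seq.
apply: big_ind => [|g h|m /degf[dx dy]]; [exact: ideal3_0 | exact: ideal3D |].
rewrite scale_in_alg mpolyX_trideg.
by apply/ideal3Ml/ideal3Mr/ideal3_prop_mod; apply: prop_mod_monomial.
Qed.

Lemma in_IY_on_line (X : seq (P3 K)) (l l' : K * K) (U V : R) :
  all (@pt_ok K) X -> l != (0, 0) -> l' != (0, 0) ->
  in_IY (filter (on_line l l') X) (U * xlin l + V * ylin l').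
Proof.
move=> /allP Xok lnz l'nz [[u v] w]; rewrite mem_filter => /andP[/andP[lu l'v]].
case/Xok/and3P=> unz vnz _; apply/in_IPE.
have [c ->] := linear_form_ldot_eq0 'X_vx0 'X_vx1 lnz unz lu.
have [c' ->] := linear_form_ldot_eq0 'X_vy0 'X_vy1 l'nz vnz l'v.
by apply: ideal3D; rewrite -scalerAr scalerAl; [apply: ideal3_gen1 | apply: ideal3_gen2].
Qed.

Lemma in_IY_off_line (X : seq (P3 K)) (l l' : K * K) (W : R) :
  all (@pt_ok K) X ->
  in_IY (filter (predC (on_line l l')) X)
    (W * (\prod_(a <- off_zero l [seq P.1.1 | P <- X]) xform a
          * \prod_(b <- off_zero l' [seq P.1.2 | P <- X]) yform b)).
Proof.
move=> /allP Xok [[u v] w]; rewrite mem_filter => /andP[off PX].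
have /and3P[unz vnz _] := Xok _ PX; apply/in_IPE; apply: ideal3Ml.
have [lu | lu] := boolP (ldot l u == 0).
  have l'v : ldot l' v != 0 by move: off; rewrite /= /on_line lu.
  have [h ->] := prod_vanishing_form_mem 'X_vy0 'X_vy1 vnz
    (P1_norm_mem_off_zero vnz (map_f (fun P : P3 K => P.1.2) PX) l'v).
  exact/ideal3Ml/ideal3_gen2.
have [h ->] := prod_vanishing_form_mem 'X_vx0 'X_vx1 unz
  (P1_norm_mem_off_zero unz (map_f (fun P : P3 K => P.1.1) PX) lu).
exact/ideal3Mr/ideal3_gen1.
Qed.

Lemma size_off_zero_pi1 (X : seq (P3 K)) (l : K * K) (P0 : P3 K) :
  all (@pt_ok K) X -> l != (0, 0) -> P0 \in X -> ldot l P0.1.1 == 0 ->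
  size (off_zero l [seq P.1.1 | P <- X]) = (card_pi1 X).-1.
Proof.
move=> /allP Xok lnz P0X lP0; rewrite (size_off_zero lnz _ (map_f _ P0X) lP0) -?map_comp //.
by rewrite all_map; apply/allP => P /Xok/and3P[].
Qed.

Lemma size_off_zero_pi2 (X : seq (P3 K)) (l : K * K) (P0 : P3 K) :
  all (@pt_ok K) X -> l != (0, 0) -> P0 \in X -> ldot l P0.1.2 == 0 ->
  size (off_zero l [seq P.1.2 | P <- X]) = (card_pi2 X).-1.
Proof.
move=> /allP Xok lnz P0X lP0; rewrite (size_off_zero lnz _ (map_f _ P0X) lP0) -?map_comp //.
by rewrite all_map; apply/allP => P /Xok/and3P[].
Qed.

Lemma in_sum_IY_bidegree (X : seq (P3 K)) (l l' : K * K) (f : R) :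
  all (@pt_ok K) X -> l != (0, 0) -> l' != (0, 0) -> has (on_line l l') X ->
  (forall m, m \in msupp f ->
     (m vx0 + m vx1 = (card_pi1 X).-1)%N /\ (m vy0 + m vy1 = (card_pi2 X).-1)%N) ->
  in_sum_IY (filter (predC (on_line l l')) X) (filter (on_line l l') X) f.
Proof.
move=> Xok lnz l'nz /hasP[P0 P0X /andP[lP0 l'P0]] degf.
rewrite -(size_off_zero_pi1 Xok lnz P0X lP0) -(size_off_zero_pi2 Xok l'nz P0X l'P0) in degf.
have [W [U [V ->]]] := ideal3_bidegree (filter_all _ _) (filter_all _ _) degf.
do 2 eexists; split; first exact: (in_IY_off_line W Xok).
  exact: (in_IY_on_line U V Xok lnz l'nz).
by rewrite addrA.
Qed.

End Trigraded.

Theorem lemma2p7 (K : closedFieldType) (charK0 : [pchar K] =i pred0)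
  (X : seq (P3 K)) (hX : point_set X)
  (l l' : K * K) (hl : l != (0, 0)) (hl' : l' != (0, 0))
  (hmeet : has (on_line l l') X) (hnsub : ~~ all (on_line l l') X) :
  let X2 := filter (on_line l l') X in
  let X1 := filter (predC (on_line l l')) X in
  let t1 := card_pi1 X in
  let t2 := card_pi2 X in
  (forall f : {mpoly K[6]}, in_trideg t1.-1 t2.-1 0 f -> in_sum_IY X1 X2 f) /\
  (forall (k : nat) (f : {mpoly K[6]}), in_trideg t1.-1 t2.-1 k f -> in_sum_IY X1 X2 f).
Proof.
move=> X2 X1 t1 t2; have /andP[Xok _] := hX.
have in_sum k f : in_trideg t1.-1 t2.-1 k f -> in_sum_IY X1 X2 f.
  by move=> degf; apply: in_sum_IY_bidegree => // m /degf[dx dy _].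
by split=> [|k] f; apply: in_sum.
Qed.
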